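(* Let $(L_\bullet,\psi)$ be an $n$-expansion Lie algebra. Then for each $i\in\mathbb{Z}_{\geq1}$, $L_i$ is spanned by the elements $[\sigma_1,[\sigma_2,[\dots,[\sigma_{i-1},\sigma_i]\dots]]]$ with $\sigma_1,\dots,\sigma_i\in L_1$. Furthermore, $\psi$ restricts to an isomorphism $L_1 \to V_{[n]}$.
   Context: $V_{[n]} = \mathbb{F}_2^n$ with basis $e_1,\dots,e_n$, viewed as a graded Lie algebra concentrated in degree $1$ with zero bracket. A graded Lie algebra over $\mathbb{F}_2$ is a Lie algebra $L_\bullet=\bigoplus_{m\geq1}L_m$ over $\mathbb{F}_2$ with $[L_h,L_k]\subseteq L_{h+k}$. An $n$-expansion Lie algebra is a pair $(L_\bullet,\psi)$ with: (1) $L_\bullet$ a graded Lie algebra over $\mathbb{F}_2$ and $\psi:L_\bullet\to V_{[n]}$ a surjective graded Lie algebra homomorphism; (2) $\ker\psi$ an abelian subalgebra; (3) $[L_\bullet,L_\bullet]=\ker\psi$; (4) for each $i\geq4$ and $\sigma_1,\dots,\sigma_i\in L_1$, the element $[\sigma_1,[\sigma_2,[\dots,[\sigma_{i-1},\sigma_i]\dots]]]$ does not depend on the order of $\sigma_1,\dots,\sigma_{i-2}$ and vanishes whenever $\sigma_s=\sigma_t$ for distinct $s,t\in\{1,\dots,i-2\}$; moreover if $\tau_1,\tau_2\in L_1$ and $\psi(\tau_1)\in\{e_1,\dots,e_n\}$ then $[\tau_1,[\tau_1,\tau_2]]=0$. *)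

From HB Require Import structures.
From mathcomp Require Import all_boot all_order all_algebra.
Set Implicit Arguments. Unset Strict Implicit. Unset Printing Implicit Defensive.
Import GRing.Theory.
Local Open Scope ring_scope.

(* A grading L = (+)_{m>=1} L_m is a family of submodules
   Lm m (only m >= 1 is used) forming an internal direct sum. *)

Definition is_graded_lie_F2 (L : lmodType 'F_2) (br : L -> L -> L)
    (Lm : nat -> {pred L}) : Prop :=

      (forall (a : 'F_2) x y z, br (a *: x + y) z = a *: br x z + br y z) /\
      (forall (a : 'F_2) x y z, br z (a *: x + y) = a *: br z x + br z y) /\
      (forall x, br x x = 0) /\
      (forall x y z, br x (br y z) + br y (br z x) + br z (br x y) = 0) /\
      (forall m, 0 \in Lm m /\
         forall (a : 'F_2) x y, x \in Lm m -> y \in Lm m -> a *: x + y \in Lm m) /\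
      (forall x, exists N (c : nat -> L),
          (forall m, c m \in Lm m.+1) /\ x = \sum_(m < N) c m) /\
      (forall N (c : nat -> L), (forall m, c m \in Lm m.+1) ->
          \sum_(m < N) c m = 0 -> forall m, (m < N)%N -> c m = 0) /\
      (forall h k x y, (0 < h)%N -> (0 < k)%N -> x \in Lm h -> y \in Lm k ->
          br x y \in Lm (h + k)%N).

Fixpoint rbr (L : Type) (br : L -> L -> L) (zero : L) (s : seq L) : L :=
  match s with
  | [::] => zero
  | [:: x] => x
  | x :: s' => br x (rbr br zero s')
  end.

Definition nested (L : lmodType 'F_2) (br : L -> L -> L) (s : seq L) : L :=
  rbr br 0 s.

Definition ebasis (n : nat) (i : 'I_n) : 'rV['F_2]_n := delta_mx 0 i.

(* n-expansion Lie algebra (L, psi), V_[n] = 'rV['F_2]_n concentrated in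
   degree 1 with zero bracket. *)
Definition is_n_expansion (n : nat) (L : lmodType 'F_2) (br : L -> L -> L)
    (Lm : nat -> {pred L}) (psi : L -> 'rV['F_2]_n) : Prop :=
  is_graded_lie_F2 br Lm /\
      (* (1) psi is a surjective graded Lie algebra homomorphism *)
      (forall (a : 'F_2) x y, psi (a *: x + y) = a *: psi x + psi y) /\
      (forall m x, (1 < m)%N -> x \in Lm m -> psi x = 0) /\
      (forall x y, psi (br x y) = 0) /\
      (forall v, exists x, psi x = v) /\
      (forall x y, psi x = 0 -> psi y = 0 -> br x y = 0) /\
      (* (3) [L, L] = ker psi  ([L,L] = F_2-span of brackets = finite sums) *)
      (forall x, psi x = 0 <->
          exists s : seq (L * L), x = \sum_(p <- s) br p.1 p.2) /\
      (forall (s s' : seq L) (a b : L), (2 <= size s)%N ->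
          all (fun x => x \in Lm 1%N) (s ++ [:: a; b]) ->
          all (fun x => x \in Lm 1%N) s' ->
          perm_eq s s' ->
          nested br (s ++ [:: a; b]) = nested br (s' ++ [:: a; b])) /\
      (forall (s : seq L) (a b : L), (2 <= size s)%N ->
          all (fun x => x \in Lm 1%N) (s ++ [:: a; b]) ->
          ~~ uniq s -> nested br (s ++ [:: a; b]) = 0) /\
      (forall t1 t2, t1 \in Lm 1%N -> t2 \in Lm 1%N ->
          (exists i, psi t1 = ebasis i) -> br t1 (br t1 t2) = 0).

From mathcomp Require Import all_boot all_order all_algebra zify.
Import GRing.Theory.
Local Open Scope ring_scope.
Set Implicit Arguments. Unset Strict Implicit.

(* An element [x] of [L_i], [i >= 2], lies in [ker psi = [L, L]], so it is a
   sum of brackets of homogeneous elements.  As the grading is direct, only the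
   brackets of total degree [i] contribute to [x]; by induction on [i] their
   factors are sums of right-nested brackets of degree-one elements, and the
   Jacobi identity expands such brackets into right-nested brackets again.  The
   same degree argument gives [L_1 \cap ker psi = 0], and [psi x = psi x_1]
   for the degree-one component [x_1] of any [x]. *)

Lemma oppv_F2 (V : lmodType 'F_2) (x : V) : - x = x.
Proof. by rewrite -scaleN1r (_ : -1 = 1) ?scale1r //; apply: val_inj. Qed.

Lemma addvv_F2 (V : lmodType 'F_2) (x : V) : x + x = 0.
Proof. by rewrite -{2}(oppv_F2 x) subrr. Qed.

Lemma sum_ord_pred1 (V : zmodType) (N d : nat) (y : V) : (0 < d <= N)%N ->
  \sum_(m < N) (if d == m.+1 then y else 0) = y.
Proof.
move=> d_bounds; rewrite -big_mkcondr /=.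
rewrite (eq_bigl (fun m : 'I_N => m == d.-1 :> nat)) => [|m].
  by rewrite big_ord1_eq ifT //; lia.
by apply/eqP/eqP; lia.
Qed.

Definition homogeneous_sum (L : zmodType) (P : nat -> L -> Prop) (x : L) :=
  exists2 r : seq (nat * L),
    (forall p, p \in r -> P p.1 p.2) & x = \sum_(p <- r) p.2.

Section HomogeneousSum.
Variables (L : zmodType) (P : nat -> L -> Prop).

Lemma homogeneous_sum1 m x : P m x -> homogeneous_sum P x.
Proof. by exists [:: (m, x)]; [move=> p /[!inE]/eqP-> | rewrite big_seq1]. Qed.

Lemma homogeneous_sum_sum (I : Type) (r : seq I) (Q : pred I) (F : I -> L) :
  (forall i, Q i -> homogeneous_sum P (F i)) ->
  homogeneous_sum P (\sum_(i <- r | Q i) F i).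
Proof.
move=> homF; apply: big_ind => [|x y [rx Prx ->] [ry Pry ->]|//].
  by exists [::]; rewrite ?big_nil.
by exists (rx ++ ry); [move=> p /[!mem_cat]/orP[/Prx|/Pry] | rewrite big_cat].
Qed.

End HomogeneousSum.

Section GradedLieAlgebra.
Variables (L : lmodType 'F_2) (br : L -> L -> L) (Lm : nat -> {pred L}).
Hypothesis graded : is_graded_lie_F2 br Lm.

Lemma brDl x y z : br (x + y) z = br x z + br y z.
Proof. by have [/(_ 1 x y z)] := graded; rewrite !scale1r. Qed.

Lemma brDr x y z : br z (x + y) = br z x + br z y.
Proof. by have [_ [/(_ 1 x y z)]] := graded; rewrite !scale1r. Qed.

Lemma br0l z : br 0 z = 0.
Proof. by apply: (@addrI _ (br 0 z)); rewrite -brDl !addr0. Qed.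

Lemma br0r z : br z 0 = 0.
Proof. by apply: (@addrI _ (br z 0)); rewrite -brDr !addr0. Qed.

Lemma br_suml (I : Type) (r : seq I) (Q : pred I) (F : I -> L) z :
  br (\sum_(i <- r | Q i) F i) z = \sum_(i <- r | Q i) br (F i) z.
Proof. exact: (big_morph (br^~ z) (fun x y => brDl x y z) (br0l z)). Qed.

Lemma br_sumr (I : Type) (r : seq I) (Q : pred I) (F : I -> L) z :
  br z (\sum_(i <- r | Q i) F i) = \sum_(i <- r | Q i) br z (F i).
Proof. exact: (big_morph (br z) (fun x y => brDr x y z) (br0r z)). Qed.

Lemma brC x y : br x y = br y x.
Proof.
have [_ [_ [alt _]]] := graded.
have := alt (x + y); rewrite brDl !brDr !alt add0r addr0 => /eqP.
by rewrite addr_eq0 oppv_F2 => /eqP.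
Qed.

Lemma br_leibniz x y z : br (br x y) z = br x (br y z) + br y (br x z).
Proof.
have [_ [_ [_ [/(_ x y z) + _]]]] := graded.
rewrite (brC z x) (brC z (br x y)) addrC => /eqP.
by rewrite addr_eq0 oppv_F2 => /eqP.
Qed.

Lemma Lm0 m : 0 \in Lm m.
Proof. by have [_ [_ [_ [_ [/(_ m) []]]]]] := graded. Qed.

Lemma LmD m x y : x \in Lm m -> y \in Lm m -> x + y \in Lm m.
Proof.
have [_ [_ [_ [_ [/(_ m) [_ /(_ 1 x y)]]]]]] := graded.
by rewrite scale1r.
Qed.

Lemma Lm_sum m (I : Type) (r : seq I) (Q : pred I) (F : I -> L) :
  (forall i, Q i -> F i \in Lm m) -> \sum_(i <- r | Q i) F i \in Lm m.
Proof.
move=> LmF; apply: (big_ind (fun v => v \in Lm m)) => //.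
  exact: Lm0.
exact: LmD.
Qed.

Lemma Lm_br h k x y : (0 < h)%N -> (0 < k)%N ->
  x \in Lm h -> y \in Lm k -> br x y \in Lm (h + k).
Proof. by have [_ [_ [_ [_ [_ [_ [_ Lm_hk]]]]]]] := graded; apply: Lm_hk. Qed.

(* The degree-[m] parts of [r], plus [x] in degree [i], sum to [x + x = 0];
   directness then kills the degree-[i] part. *)
Lemma Lm_component i x (r : seq (nat * L)) : (0 < i)%N -> x \in Lm i ->
    (forall p, p \in r -> (0 < p.1)%N /\ p.2 \in Lm p.1) ->
  x = \sum_(p <- r) p.2 -> x = \sum_(p <- r | p.1 == i) p.2.
Proof.
move=> i_gt0 xi homr x_sum.
have [_ [_ [_ [_ [_ [_ [direct _]]]]]]] := graded.
pose N := (\max_(p <- r) p.1 + i)%N.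
pose c m := \sum_(p <- r | p.1 == m.+1) p.2 + (if i == m.+1 then x else 0).
have c_hom m : c m \in Lm m.+1.
  apply: LmD; last by case: eqP => [<- //|_]; apply: Lm0.
  by rewrite big_seq_cond; apply: Lm_sum => p /andP[/homr[_ +] /eqP <-].
have c_sum : \sum_(m < N) c m = 0.
  rewrite big_split /= sum_ord_pred1 -?[RHS](addvv_F2 x); last by lia.
  congr (_ + _); rewrite [RHS]x_sum.
  under eq_bigr do rewrite big_mkcond /=.
  rewrite exchange_big /= !big_seq; apply: eq_bigr => p p_r.
  have [p_gt0 _] := homr p p_r.
  have p1_le := @leq_bigmax_seq _ r (fun _ => true) (fun p => p.1) p p_r isT.
  by rewrite sum_ord_pred1 // p_gt0 (leq_trans p1_le) ?leq_addr.
have i_lt_N : (i.-1 < N)%N by lia.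
have /eqP := direct N c c_hom c_sum i.-1 i_lt_N.
by rewrite /c prednK // eqxx addr_eq0 oppv_F2 => /eqP ->.
Qed.

Lemma homogeneous_decomposition x :
  homogeneous_sum (fun m y => (0 < m)%N /\ y \in Lm m) x.
Proof.
have [_ [_ [_ [_ [_ [/(_ x) [N [c [c_hom ->]]] _]]]]]] := graded.
apply: homogeneous_sum_sum => m _.
by apply: (homogeneous_sum1 (m := m.+1)); split; last exact: c_hom.
Qed.

Lemma homogeneous_sum_br (P : nat -> L -> Prop) x y :
    (forall h k u v, (0 < h)%N -> (0 < k)%N -> u \in Lm h -> v \in Lm k ->
       P (h + k)%N (br u v)) ->
  homogeneous_sum P (br x y).
Proof.
move=> P_br.
have [r hom_r ->] := homogeneous_decomposition x.
have [s hom_s ->] := homogeneous_decomposition y.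
rewrite br_suml big_seq; apply: homogeneous_sum_sum => p /hom_r[p_gt0 p_hom].
rewrite br_sumr big_seq; apply: homogeneous_sum_sum => q /hom_s[q_gt0 q_hom].
exact: homogeneous_sum1 (P_br _ _ _ _ p_gt0 q_gt0 p_hom q_hom).
Qed.

Lemma homogeneous_sum_component (P : nat -> L -> Prop) i x :
    (0 < i)%N -> x \in Lm i -> (forall m y, P m y -> (0 < m)%N /\ y \in Lm m) ->
  homogeneous_sum P x -> homogeneous_sum (fun m y => m = i /\ P m y) x.
Proof.
move=> i_gt0 xi P_hom [r P_r x_sum].
exists [seq p <- r | p.1 == i].
  by move=> p /[!mem_filter]/andP[/eqP <- /P_r Pp]; split.
rewrite (big_filter r (fun p => p.1 == i)).
by apply: Lm_component => // p /P_r/P_hom.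
Qed.

Definition nested_span (i : nat) (x : L) : Prop :=
  exists S : seq (seq L),
    all (fun s => (size s == i) && all (fun y => y \in Lm 1%N) s) S /\
    x = \sum_(s <- S) nested br s.

Lemma nested_span0 i : nested_span i 0.
Proof. by exists [::]; rewrite big_nil. Qed.

Lemma nested_spanD i x y :
  nested_span i x -> nested_span i y -> nested_span i (x + y).
Proof.
move=> [S [S_ok ->]] [T [T_ok ->]].
by exists (S ++ T); rewrite all_cat S_ok T_ok big_cat.
Qed.

Lemma nested_span_sum i (I : Type) (r : seq I) (Q : pred I) (F : I -> L) :
    (forall j, Q j -> nested_span i (F j)) ->
  nested_span i (\sum_(j <- r | Q j) F j).
Proof.
move=> F_span; apply: big_ind => //.
  exact: nested_span0.
exact: nested_spanD.
Qed.

Lemma nested_span_nested s :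
  all (fun y => y \in Lm 1%N) s -> nested_span (size s) (nested br s).
Proof. by move=> s1; exists [:: s]; rewrite /= eqxx s1 big_seq1. Qed.

Lemma nested_span_cons a k y : a \in Lm 1%N -> (0 < k)%N ->
  nested_span k y -> nested_span k.+1 (br a y).
Proof.
move=> a1 k_gt0 [S [S_ok ->]]; rewrite br_sumr big_seq.
apply: nested_span_sum => s s_S; have /andP[/eqP size_s s1] := allP S_ok s s_S.
case: s size_s s1 {s_S} => [|b s] size_s s1; first by rewrite -size_s in k_gt0.
by rewrite -size_s; apply: (@nested_span_nested [:: a, b & s]); rewrite /= a1.
Qed.

(* Induction on [size s], via [[[a, n], y] = [a, [n, y]] + [n, [a, y]]]. *)
Lemma nested_span_br_nested h s k y : size s = h.+1 ->
    all (fun y => y \in Lm 1%N) s -> (0 < k)%N -> nested_span k y ->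
  nested_span (h.+1 + k) (br (nested br s) y).
Proof.
elim: h s k y => [|h IH] [|a [|b s]] // k y.
  by move=> _ /andP[a1 _] k_gt0 y_span; rewrite add1n; apply: nested_span_cons.
move=> [size_s] /andP[a1 s1] k_gt0 y_span.
have -> : nested br [:: a, b & s] = br a (nested br (b :: s)) by [].
have IH' k' y' := IH (b :: s) k' y' (congr1 S size_s) s1.
rewrite br_leibniz; apply: nested_spanD.
  by rewrite addSn; apply: nested_span_cons => //; apply: IH'.
by rewrite addSnnS; apply: IH' => //; apply: nested_span_cons.
Qed.

Lemma nested_span_br h k x y : (0 < h)%N -> (0 < k)%N ->
  nested_span h x -> nested_span k y -> nested_span (h + k) (br x y).
Proof.
case: h => // h _ k_gt0 [S [S_ok ->]] y_span; rewrite br_suml big_seq.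
apply: nested_span_sum => s s_S; have /andP[/eqP size_s s1] := allP S_ok s s_S.
exact: nested_span_br_nested.
Qed.

Lemma mem_nested s : (0 < size s)%N ->
  all (fun y => y \in Lm 1%N) s -> nested br s \in Lm (size s).
Proof.
elim: s => [|a [|b s] IH] //= _ /andP[a1 s1]; first by [].
by rewrite -[(size s).+2]add1n; apply: Lm_br => //; apply: IH.
Qed.

Lemma nested_span_mem i x : (0 < i)%N -> nested_span i x -> x \in Lm i.
Proof.
move=> i_gt0 [S [S_ok ->]]; rewrite big_seq; apply: Lm_sum => s s_S.
have /andP[/eqP size_s s1] := allP S_ok s s_S.
by rewrite -size_s in i_gt0 *; apply: mem_nested.
Qed.

Section Expansion.
Variables (V : lmodType 'F_2) (psi : L -> V).
Hypothesis psi_linear :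
  forall (a : 'F_2) x y, psi (a *: x + y) = a *: psi x + psi y.
Hypothesis psi_Lm : forall m x, (1 < m)%N -> x \in Lm m -> psi x = 0.
Hypothesis ker_psi :
  forall x, psi x = 0 -> exists s : seq (L * L), x = \sum_(p <- s) br p.1 p.2.

Lemma psiD x y : psi (x + y) = psi x + psi y.
Proof. by have := psi_linear 1 x y; rewrite !scale1r. Qed.

Lemma psi0 : psi 0 = 0.
Proof. by apply: (@addrI _ (psi 0)); rewrite -psiD !addr0. Qed.

Lemma psi_sum (I : Type) (r : seq I) (Q : pred I) (F : I -> L) :
  psi (\sum_(i <- r | Q i) F i) = \sum_(i <- r | Q i) psi (F i).
Proof. exact: (big_morph psi psiD psi0). Qed.

Lemma ker_psi_homogeneous (P : nat -> L -> Prop) x : psi x = 0 ->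
    (forall h k u v, (0 < h)%N -> (0 < k)%N -> u \in Lm h -> v \in Lm k ->
       P (h + k)%N (br u v)) ->
  homogeneous_sum P x.
Proof.
move=> /ker_psi[s ->] P_br.
by apply: homogeneous_sum_sum => p _; apply: homogeneous_sum_br.
Qed.

Lemma mem_Lm_nested_span i x : (0 < i)%N -> x \in Lm i <-> nested_span i x.
Proof.
move=> i_gt0; split; last exact: nested_span_mem.
elim/ltn_ind: i i_gt0 x => i IH i_gt0 x xi.
have [i_gt1|i_le1] := ltnP 1 i; last first.
  have i1 : i = 1%N by lia.
  by rewrite i1 in xi *; apply: (@nested_span_nested [:: x]); rewrite /= xi.
pose P m y := [/\ (0 < m)%N, y \in Lm m & (m <= i)%N -> nested_span m y].
have x_hom : homogeneous_sum P x.
  apply: ker_psi_homogeneous; first exact: psi_Lm i_gt1 xi.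
  move=> h k u v h_gt0 k_gt0 uh vk; split; [lia | exact: Lm_br |].
  by move=> hk_le_i; apply: nested_span_br => //; apply: IH => //; lia.
have [|r P_r ->] := homogeneous_sum_component i_gt0 xi _ x_hom.
  by move=> m y [].
by rewrite big_seq; apply: nested_span_sum => p /P_r[-> [_ _ /(_ (leqnn i))]].
Qed.

Lemma psi_injective_Lm1 : {in Lm 1%N &, injective psi}.
Proof.
move=> x y x1 y1 psi_xy.
have psi_xy0 : psi (x + y) = 0 by rewrite psiD psi_xy addvv_F2.
have xy_hom : homogeneous_sum (fun m z => (1 < m)%N /\ z \in Lm m) (x + y).
  apply: ker_psi_homogeneous => // h k u v h_gt0 k_gt0 uh vk.
  by split; [lia | exact: Lm_br].
have [|r P_r xy_sum] :=
  homogeneous_sum_component (i := 1%N) isT (LmD x1 y1) _ xy_hom.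
  by move=> m z [/ltnW].
rewrite big_seq big1 in xy_sum; last by move=> p /P_r[-> []].
by apply/eqP; rewrite -(oppv_F2 y) -addr_eq0 xy_sum.
Qed.

Lemma psi_Lm1_preimage x : exists2 x1, x1 \in Lm 1%N & psi x1 = psi x.
Proof.
have [r hom_r ->] := homogeneous_decomposition x.
exists (\sum_(p <- r | p.1 == 1%N) p.2).
  rewrite big_seq_cond; apply: Lm_sum => p /andP[/hom_r[_ p_hom] /eqP p1].
  by rewrite p1 in p_hom.
have psi_high : psi (\sum_(p <- r | p.1 != 1%N) p.2) = 0.
  rewrite psi_sum big_seq_cond big1 // => p /andP[/hom_r[p_gt0 p_hom] p_ne1].
  by apply: psi_Lm p_hom; rewrite ltn_neqAle eq_sym p_ne1.
by rewrite [in RHS](bigID (fun p => p.1 == 1%N)) /= psiD psi_high addr0.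
Qed.

End Expansion.

End GradedLieAlgebra.

Theorem proposition3p4 (n : nat) (L : lmodType 'F_2) (br : L -> L -> L)
    (Lm : nat -> {pred L}) (psi : L -> 'rV['F_2]_n) :
  is_n_expansion br Lm psi ->
  (forall i, (0 < i)%N -> forall x,
      x \in Lm i <->
      exists S : seq (seq L),
        all (fun s => (size s == i) && all (fun y => y \in Lm 1%N) s) S /\
        x = \sum_(s <- S) nested br s) /\
  {in Lm 1%N &, injective psi} /\
  (forall v : 'rV['F_2]_n, exists2 x, x \in Lm 1%N & psi x = v).
Proof.
move=> [graded [psi_linear [psi_Lm [_ [psi_onto [_ [ker_psi _]]]]]]].
have ker_psi_br x := (ker_psi x).1.
split.
  move=> i i_gt0 x.
  exact: (mem_Lm_nested_span (psi := psi) graded psi_Lm ker_psi_br x i_gt0).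
split.
  exact: (psi_injective_Lm1 (psi := psi) graded psi_linear ker_psi_br).
move=> v; have [x <-] := psi_onto v.
exact: (psi_Lm1_preimage (psi := psi) graded psi_linear psi_Lm x).
Qed.
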